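(* Let $K\subset\mathbb{C}^2$ be compact, nonpluripolar, and satisfy $e^{i\theta}\circ K=K$ for all $\theta\in\mathbb{R}$. Let $\theta\in\mathcal{C}$ and let $\{Q_n\}$, $Q_n\in M^{\prec_C}_{k_n}(\alpha_n)$, be $\theta$-asymptotically Chebyshev for $K$. Then $\{\widehat Q_n\}$ is $\theta$-asymptotically Chebyshev for $K$, where $\widehat Q_n$ is the top part of $Q_n$ relative to $Poly(k_nC)$.
   Context: $a,b$ relatively prime positive integers; $C$ the triangle with vertices $(0,0),(b,0),(0,a)$; $Poly(kC)$ is the space of $p=\sum_{aj+bl\le kab}c_{jl}z_1^jz_2^l$ with top part $\widehat p=\sum_{aj+bl=kab}c_{jl}z_1^jz_2^l$; $\deg_C(p)=\min\{k:p\in Poly(kC)\}$. $\lambda\circ(z_1,z_2)=(\lambda^az_1,\lambda^bz_2)$. Order $\prec_C$: $\alpha\prec_C\beta$ if $\deg_C(z^\alpha)<\deg_C(z^\beta)$, or equal $C$-degrees and $\alpha_2<\beta_2$. $M^{\prec_C}_k(\alpha)=\{p\in Poly(kC):p=z^\alpha+\sum_{\beta\prec_C\alpha}c_\beta z^\beta\}$; $T^C_k(K,\alpha)=\inf\{\|p\|_K:p\in M^{\prec_C}_k(\alpha)\}^{1/k}$. $\mathcal{C}=\{\phi:a\phi_1+b\phi_2=ab,\ \phi_1\phi_2>0\}$. For $\theta\in\mathcal{C}$, $\tau(K,\theta)=\lim_{k\to\infty,\alpha/k\to\theta}T^C_k(K,\alpha)$ (this limit exists). $\{Q_n\}$ is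 $\theta$-asymptotically Chebyshev for $K$ if $Q_n\in M^{\prec_C}_{k_n}(\alpha_n)$ with $k_n\to\infty$, $\alpha_n/k_n\to\theta$, and $\|Q_n\|_K^{1/k_n}\to\tau(K,\theta)$. *)

From mathcomp Require Import all_boot all_order all_algebra.
From mathcomp Require Import all_classical all_reals all_analysis.
From mathcomp Require Import complex.
Set Implicit Arguments.
Unset Strict Implicit.
Unset Printing Implicit Defensive.
Import Order.TTheory GRing.Theory Num.Theory.
Import numFieldNormedType.Exports.
Local Open Scope classical_set_scope.
Local Open Scope ring_scope.

Section Defs.
Variable R : realType.
Local Notation C := (R[i]).

Definition cmod (z : C) : R := Num.sqrt (complex.Re z ^+ 2 + complex.Im z ^+ 2).

Definition cexpi (t : R) : C := (cos t +i* sin t)%C.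

(* the topology of C^2 is that of R^4: identification map *)
Definition toR4 (z : C * C) : (R * R) * (R * R) :=
  ((complex.Re z.1, complex.Im z.1), (complex.Re z.2, complex.Im z.2)).

Definition compactC2 (K : set (C * C)) : Prop :=
  @compact ((R * R) * (R * R))%type (toR4 @` K).

Definition cdist (z w : C * C) : R := Num.max (cmod (z.1 - w.1)) (cmod (z.2 - w.2)).

Definition usc (u : C * C -> \bar R) : Prop :=
  forall (z : C * C) (t : R), (u z < t%:E)%E ->
    exists2 r : R, 0 < r & forall w, cdist w z < r -> (u w < t%:E)%E.

(* plurisubharmonic on C^2: usc, never +oo, and its restriction to every complex
   line lambda |-> z + lambda w satisfies the sub-mean value inequality on every
   circle (centre 0, radius |w| in the parameter). *)
Definition psh (u : C * C -> \bar R) : Prop :=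
  [/\ forall z, u z != +oo%E,
      usc u &
      forall z w : C * C,
        (u z <= ((2 * pi)^-1)%:E *
           \int[(@lebesgue_measure R)]_(t in `[0%R, (2 * pi)%R]%classic)
              u ((z.1 + cexpi t * w.1)%R, (z.2 + cexpi t * w.2)%R))%E].

Definition pluripolar (E : set (C * C)) : Prop :=
  exists u : C * C -> \bar R,
    [/\ psh u, exists z, u z != -oo%E & forall z, E z -> u z = -oo%E].

Variables a b : nat.

(* a polynomial in z1, z2 is given by its (finitely supported) coefficient
   function (j, l) |-> c_{jl}; the coefficient of z1^j z2^l. *)
Definition cpoly := nat -> nat -> C.

Definition inPoly (k : nat) (p : cpoly) : Prop :=
  forall j l, p j l != 0 -> (a * j + b * l <= k * (a * b))%N.

(* evaluation of p (assumed in Poly(kC), so its support is in the box) *)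
Definition peval (k : nat) (p : cpoly) (z : C * C) : C :=
  \sum_(j < (k * b).+1) \sum_(l < (k * a).+1) p j l * z.1 ^+ j * z.2 ^+ l.

Definition top (k : nat) (p : cpoly) : cpoly :=
  fun j l => if (a * j + b * l == k * (a * b))%N then p j l else 0.

(* deg_C(z^beta) = min {k : z^beta in Poly(kC)} = ceil((a b1 + b b2)/(ab)) *)
Definition degC (beta : nat * nat) : nat :=
  ((a * beta.1 + b * beta.2) + (a * b).-1) %/ (a * b).

Definition precC (al be : nat * nat) : bool :=
  (degC al < degC be)%N || ((degC al == degC be) && (al.2 < be.2)%N).

Definition inM (k : nat) (al : nat * nat) (p : cpoly) : Prop :=
  [/\ inPoly k p, p al.1 al.2 = 1 &
      forall j l, p j l != 0 -> (j, l) = al \/ precC (j, l) al].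

Definition supnorm (K : set (C * C)) (k : nat) (p : cpoly) : R :=
  sup [set cmod (peval k p z) | z in K].

Definition Tch (K : set (C * C)) (k : nat) (al : nat * nat) : R :=
  powR (inf [set supnorm K k p | p in [set p | inM k al p]]) (k%:R^-1).

Definition inCC (phi : R * R) : Prop :=
  a%:R * phi.1 + b%:R * phi.2 = (a * b)%:R /\ 0 < phi.1 * phi.2.

Definition topidx (k : nat) (al : nat * nat) : Prop :=
  (a * al.1 + b * al.2)%N = (k * (a * b))%N.

Definition is_tau (K : set (C * C)) (th : R * R) (L : R) : Prop :=
  forall e : R, 0 < e -> exists N : nat, exists2 d : R, 0 < d &
    forall (k : nat) (al : nat * nat), (N <= k)%N -> topidx k al ->
      `|al.1%:R / k%:R - th.1| < d -> `|al.2%:R / k%:R - th.2| < d ->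
      `|Tch K k al - L| < e.

(* tau(K, theta): the limit (which exists by the paper) *)
Definition tau (K : set (C * C)) (th : R * R) : R := xget 0 (is_tau K th).

Definition asympCheb (K : set (C * C)) (th : R * R)
    (k : nat -> nat) (al : nat -> nat * nat) (Q : nat -> cpoly) : Prop :=
  [/\ forall n, inM (k n) (al n) (Q n),
      forall n, topidx (k n) (al n),
      forall N : nat, exists n0, forall n, (n0 <= n)%N -> (N <= k n)%N,
      ((fun n => (al n).1%:R / (k n)%:R : R) @ \oo --> th.1 /\
       (fun n => (al n).2%:R / (k n)%:R : R) @ \oo --> th.2) &
      (fun n => powR (supnorm K (k n) (Q n)) ((k n)%:R^-1)) @ \oo --> tau K th].

End Defs.

From mathcomp Require Import all_boot all_order all_algebra.
From mathcomp Require Import all_classical all_reals all_analysis.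
From mathcomp Require Import complex.
From mathcomp Require Import ring lra zify.
Set Implicit Arguments.
Unset Strict Implicit.
Unset Printing Implicit Defensive.
Import Order.TTheory GRing.Theory Num.Theory.
Import numFieldNormedType.Exports.
Local Open Scope classical_set_scope.
Local Open Scope ring_scope.

(* Let N = k a b + 1 and w = exp(2 i pi / N).  Since a j + b l + 1 lies in
   [1, N] for every monomial of Poly(kC), the sum over m < N of
   w^(m (a j + b l + 1)) is N on the top face a j + b l = k a b and 0 elsewhere,
   so N top(p)(z) = sum_m w^m p(w^m o z).  When K is invariant under the
   action o, this gives |top(p)|_K <= |p|_K.  Since top(Q_n) is still in
   M_{k_n}(alpha_n), its normalised norm is squeezed between T_{k_n}(K, alpha_n)
   and that of Q_n, which both tend to tau(K, theta) (if the limit defining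
   tau does not exist, tau is the default value 0, itself a lower bound). *)

Section ComplexModulus.
Variable R : realType.
Implicit Types x y z : R[i].

Lemma normr_cmod z : `|z| = ((cmod z)%:C)%C.
Proof. exact: normc_def. Qed.

Lemma cmod_ge0 z : 0 <= cmod z.
Proof. exact: sqrtr_ge0. Qed.

Lemma cmodM x y : cmod (x * y) = cmod x * cmod y.
Proof. by apply: complexI; rewrite -normr_cmod normrM !normr_cmod -rmorphM. Qed.

Lemma cmodX x n : cmod (x ^+ n) = cmod x ^+ n.
Proof. by apply: complexI; rewrite -normr_cmod normrX normr_cmod -rmorphXn. Qed.

Lemma cmod_nat n : cmod (n%:R : R[i]) = n%:R.
Proof. by apply: complexI; rewrite -normr_cmod normr_nat rmorph_nat. Qed.

Lemma cmodD x y : cmod (x + y) <= cmod x + cmod y.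
Proof.
rewrite -lecR -normr_cmod; apply: le_trans (ler_normD _ _) _.
by rewrite !normr_cmod rmorphD.
Qed.

Lemma cmod_sum I (r : seq I) (P : pred I) (F : I -> R[i]) :
  cmod (\sum_(i <- r | P i) F i) <= \sum_(i <- r | P i) cmod (F i).
Proof.
rewrite -lecR -normr_cmod rmorph_sum; apply: le_trans (ler_norm_sum _ _ _) _.
by apply: ler_sum => i _; rewrite normr_cmod.
Qed.

Lemma cmod_le_ReIm z : cmod z <= `|complex.Re z| + `|complex.Im z|.
Proof.
case: z => x y; have -> : (x +i* y)%C = (x +i* 0)%C + (0 +i* y)%C by simpc.
apply: le_trans (cmodD _ _) _.
by rewrite /cmod /= !expr0n /= !addr0 !add0r !sqrtr_sqr.
Qed.

Lemma cmod_prim_root n z : n.-primitive_root z -> cmod z = 1.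
Proof.
move=> prim_z; apply/eqP; rewrite -(pexpr_eq1 (prim_order_gt0 prim_z)) ?cmod_ge0 //.
by rewrite -cmodX prim_expr_order // (cmod_nat 1).
Qed.

Lemma compactC2_bounded (K : set (R[i] * R[i])) : compactC2 K ->
  exists B : R, forall z : R[i] * R[i], K z -> cmod z.1 <= B /\ cmod z.2 <= B.
Proof.
move=> /compact_bounded [M [M_real M_bnd]].
have /M_bnd K_bnd : M < `|M| + 1 by rewrite (le_lt_trans (real_ler_norm M_real)) ?ltrDl.
exists ((`|M| + 1) *+ 2) => z Kz; have := K_bnd (toR4 z) (ex_intro2 _ _ z Kz erefl).
rewrite /= !prod_normE /= !ge_max => /andP[/andP[le_Re1 le_Im1] /andP[le_Re2 le_Im2]].
by split; apply: le_trans (cmod_le_ReIm _) _; rewrite mulr2n lerD.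
Qed.

End ComplexModulus.

Lemma prim_root_sum_expr (F : idomainType) n (w : F) d : n.-primitive_root w ->
  \sum_(m < n) w ^+ (d * m) = if (n %| d)%N then n%:R else 0.
Proof.
move=> prim_w; under eq_bigr do rewrite exprM.
rewrite (prim_order_dvd prim_w); have [wd1|wd_neq1] := eqVneq (w ^+ d) 1.
  by under eq_bigr => m _ do rewrite wd1 expr1n; rewrite sumr_const card_ord.
have : (w ^+ d - 1) * \sum_(m < n) (w ^+ d) ^+ m = 0.
  by rewrite -subrX1 exprAC (prim_expr_order prim_w) expr1n subrr.
by move/eqP; rewrite mulf_eq0 subr_eq0 (negbTE wd_neq1) => /eqP.
Qed.

Section Cexpi.
Variable R : realType.

Lemma cexpiD x y : cexpi x * cexpi y = cexpi (x + y) :> R[i].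
Proof. by rewrite /cexpi /= cosD sinD; congr (_ +i* _)%C; ring. Qed.

Lemma cexpiMn x n : cexpi x ^+ n = cexpi (x *+ n) :> R[i].
Proof.
elim: n => [|n IH]; first by rewrite expr0 mulr0n /cexpi cos0 sin0.
by rewrite exprS IH cexpiD mulrS.
Qed.

Lemma cexpi_neq1 x : 0 < x < pi *+ 2 -> cexpi x != 1 :> R[i].
Proof.
move=> /andP[x_gt0 x_lt2pi]; apply/negP => /eqP [].
have -> : x = x / 2 + x / 2 by rewrite -splitr.
rewrite cosD -!expr2 => cos_x _.
have sin_gt0 : 0 < sin (x / 2).
  by apply: sin_gt0_pi; rewrite divr_gt0 //= ltr_pdivrMr // mulr_natr.
have := cos2Dsin2 (x / 2); have : sin (x / 2) ^+ 2 != 0 by rewrite sqrf_eq0 gt_eqF.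
lra.
Qed.

Lemma cexpi_prim_root n : (0 < n)%N -> n.-primitive_root (cexpi (pi *+ 2 / n%:R) : R[i]).
Proof.
move=> n_gt0; apply/andP; split => //; apply/forallP => i; apply/eqP.
have n0 : n%:R != 0 :> R by rewrite pnatr_eq0 -lt0n.
rewrite unity_rootE cexpiMn; have [->|i_neq_n] := eqVneq i.+1 n.
  by rewrite -[_ *+ n]mulr_natr divfK // /cexpi cos2pi sin2pi eqxx.
have i_lt_n : (i.+1 < n)%N by rewrite ltn_neqAle i_neq_n ltn_ord.
have pi2_gt0 : 0 < pi *+ 2 :> R by rewrite mulrn_wgt0 // pi_gt0.
apply/negbTE/cexpi_neq1; rewrite -[_ *+ i.+1]mulr_natr mulrAC.
rewrite divr_gt0 ?mulr_gt0 ?ltr0n //=.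
by rewrite ltr_pdivrMr ?ltr0n // ltr_pM2l // ltr_nat.
Qed.

End Cexpi.

Section TopPart.
Variables (R : realType) (a b : nat).
Local Notation C := (R[i]).
Local Notation N k := (k * (a * b)).+1.

Definition qh_act (l : C) (z : C * C) : C * C := (l ^+ a * z.1, l ^+ b * z.2).

Lemma peval_top_avg k (w : C) (p : cpoly R) z :
  (N k).-primitive_root w -> inPoly a b k p ->
  (N k)%:R * peval a b k (top a b k p) z =
  \sum_(m < N k) w ^+ m * peval a b k p (qh_act (w ^+ m) z).
Proof.
move=> prim_w p_in; rewrite /peval mulr_sumr.
under [RHS]eq_bigr => m _ do rewrite mulr_sumr.
rewrite exchange_big; apply: eq_bigr => j _; rewrite mulr_sumr.
under [RHS]eq_bigr => m _ do rewrite mulr_sumr.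
rewrite exchange_big; apply: eq_bigr => l _ /=.
transitivity (p j l * z.1 ^+ j * z.2 ^+ l *
              \sum_(m < N k) w ^+ ((a * j + b * l).+1 * m)); last first.
  rewrite mulr_sumr; apply: eq_bigr => m _; rewrite !exprMn -!exprM.
  rewrite (_ : ((a * j + b * l).+1 * m = m + m * a * j + m * b * l)%N); last by lia.
  by rewrite !exprD; ring.
rewrite (prim_root_sum_expr _ prim_w) /top.
have [p0|/p_in pjl_le] := eqVneq (p j l) 0; first by rewrite p0 if_same !mul0r mulr0.
case: eqP => [top_eq|/eqP top_neq]; first by rewrite top_eq dvdnn; ring.
by rewrite ifN ?mul0r ?mulr0 //; apply/negP => /dvdn_leq; lia.
Qed.

Lemma cmod_peval_top_le k (w : C) (p : cpoly R) z (S : R) :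
  (N k).-primitive_root w -> inPoly a b k p ->
  (forall m, cmod (peval a b k p (qh_act (w ^+ m) z)) <= S) ->
  cmod (peval a b k (top a b k p) z) <= S.
Proof.
move=> prim_w p_in le_S; have N_gt0 : (0 : R) < (N k)%:R by rewrite ltr0n.
rewrite -(ler_pM2l N_gt0) -{1}(@cmod_nat R (N k)) -cmodM.
rewrite (peval_top_avg _ prim_w p_in); apply: le_trans (cmod_sum _ _ _) _.
have -> : (N k)%:R * S = \sum_(m < N k) S by rewrite sumr_const card_ord mulr_natl.
apply: ler_sum => m _; rewrite cmodM cmodX (cmod_prim_root prim_w) expr1n mul1r.
exact: le_S.
Qed.

Lemma peval_bound k (p : cpoly R) (B : R) z : cmod z.1 <= B -> cmod z.2 <= B ->
  cmod (peval a b k p z) <=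
  \sum_(j < (k * b).+1) \sum_(l < (k * a).+1) cmod (p j l) * B ^+ j * B ^+ l.
Proof.
move=> le1 le2; apply: le_trans (cmod_sum _ _ _) _; apply: ler_sum => j _.
apply: le_trans (cmod_sum _ _ _) _; apply: ler_sum => l _.
rewrite !cmodM !cmodX ler_pM ?ler_wpM2l ?mulr_ge0 ?exprn_ge0 ?cmod_ge0 //.
  by rewrite lerXn2r ?nnegrE ?cmod_ge0 // (le_trans _ le2) ?cmod_ge0.
by rewrite lerXn2r ?nnegrE ?cmod_ge0 // (le_trans _ le1) ?cmod_ge0.
Qed.

End TopPart.

Section SupNorm.
Variables (R : realType) (a b : nat) (K : set (R[i] * R[i])).

Lemma supnorm_ge0 k (p : cpoly R) : 0 <= supnorm a b K k p.
Proof.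
rewrite /supnorm.
have [[[x Sx] ub]|no_sup] := pselect (has_sup [set cmod (peval a b k p z) | z in K]).
  by apply: le_trans (ub_le_sup ub Sx); case: Sx => z _ <-; exact: cmod_ge0.
by rewrite sup_out.
Qed.

Lemma supnorm_ubound k (p : cpoly R) : compactC2 K ->
  has_ubound [set cmod (peval a b k p z) | z in K].
Proof.
move=> /compactC2_bounded [B K_bnd].
exists (\sum_(j < (k * b).+1) \sum_(l < (k * a).+1) cmod (p j l) * B ^+ j * B ^+ l).
by move=> _ [z /K_bnd [le1 le2] <-]; exact: peval_bound.
Qed.

Lemma supnorm_ge_cmod k (p : cpoly R) z : compactC2 K -> K z ->
  cmod (peval a b k p z) <= supnorm a b K k p.
Proof.
move=> K_cpt Kz; rewrite /supnorm.
by apply: (ub_le_sup (supnorm_ubound k p K_cpt)); exists z.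
Qed.

Lemma supnorm_le k (p q : cpoly R) :
  (forall z, K z -> cmod (peval a b k q z) <= supnorm a b K k p) ->
  supnorm a b K k q <= supnorm a b K k p.
Proof.
move=> le_q; have [K0|/set0P [z0 Kz0]] := eqVneq K set0.
  by rewrite /supnorm K0 !image_set0.
apply: ge_sup; first by exists (cmod (peval a b k q z0)), z0.
by move=> _ [z Kz <-]; exact: le_q.
Qed.

Lemma supnorm_top_le k (p : cpoly R) : compactC2 K ->
  (forall t, [set qh_act a b (cexpi t) z | z in K] = K) -> inPoly a b k p ->
  supnorm a b K k (top a b k p) <= supnorm a b K k p.
Proof.
move=> K_cpt K_inv p_in; apply: supnorm_le => z Kz.
apply: (cmod_peval_top_le (cexpi_prim_root _ _)) => // m.
have K_rot : K (qh_act a b (cexpi (pi *+ 2 / (k * (a * b)).+1%:R) ^+ m) z).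
  by rewrite cexpiMn -(K_inv (pi *+ 2 / (k * (a * b)).+1%:R *+ m)); exists z.
exact: supnorm_ge_cmod.
Qed.

Lemma Tch_le_supnorm k al (p : cpoly R) :
  inM a b k al p -> Tch a b K k al <= powR (supnorm a b K k p) k%:R^-1.
Proof.
move=> p_in; apply: ge0_ler_powR; rewrite ?invr_ge0 ?nnegrE ?supnorm_ge0 //.
  apply: lb_le_inf; first by exists (supnorm a b K k p), p.
  by move=> _ [q _ <-]; exact: supnorm_ge0.
by apply: ge_inf; [exists 0 => _ [q _ <-]; exact: supnorm_ge0 | exists p].
Qed.

End SupNorm.

Lemma inM_top (R : realType) a b k al (p : cpoly R) :
  inM a b k al p -> topidx a b k al -> inM a b k al (top a b k p).
Proof.
case=> p_in p_al p_lt al_top; split.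
- by move=> j l; rewrite /top; case: ifP => [/eqP -> _|_]; rewrite ?eqxx.
- by rewrite /top al_top eqxx.
- by move=> j l; rewrite /top; case: ifP => _; [exact: p_lt | rewrite eqxx].
Qed.

Section AsymptoticChebyshev.
Variables (R : realType) (a b : nat) (K : set (R[i] * R[i])) (th : R * R).
Variables (k : nat -> nat) (al : nat -> nat * nat).

Lemma tau_out : ~ (exists L, is_tau a b K th L) -> tau a b K th = 0.
Proof. by move=> no_tau; rewrite /tau xgetPN // => L tau_L; apply: no_tau; exists L. Qed.

Lemma Tch_cvg_tau : (exists L, is_tau a b K th L) ->
  (forall N, exists n0, forall n, (n0 <= n)%N -> (N <= k n)%N) ->
  (forall n, topidx a b (k n) (al n)) ->
  (fun n => (al n).1%:R / (k n)%:R : R) @ \oo --> th.1 ->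
  (fun n => (al n).2%:R / (k n)%:R : R) @ \oo --> th.2 ->
  (fun n => Tch a b K (k n) (al n)) @ \oo --> tau a b K th.
Proof.
move=> /(xgetPex 0) tau_lim k_oo al_top al1_cvg al2_cvg.
apply/cvgrPdist_lt => e e_gt0; have [N [d d_gt0 tau_N]] := tau_lim e e_gt0.
have [n0 k_ge] := k_oo N.
have al1_near := (cvgrPdist_lt _ _).1 al1_cvg _ d_gt0.
have al2_near := (cvgrPdist_lt _ _).1 al2_cvg _ d_gt0.
near=> n; rewrite distrC; apply: tau_N => //.
- by apply: k_ge; near: n; exists n0.
- by rewrite distrC; near: n; exact: al1_near.
- by rewrite distrC; near: n; exact: al2_near.
Unshelve. all: by end_near.
Qed.

Lemma asympCheb_le (P Q : nat -> cpoly R) :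
  asympCheb a b K th k al Q -> (forall n, inM a b (k n) (al n) (P n)) ->
  (forall n, supnorm a b K (k n) (P n) <= supnorm a b K (k n) (Q n)) ->
  asympCheb a b K th k al P.
Proof.
case=> _ al_top k_oo [al1_cvg al2_cvg] Q_cvg P_in P_le.
have root_le n : powR (supnorm a b K (k n) (P n)) (k n)%:R^-1 <=
                 powR (supnorm a b K (k n) (Q n)) (k n)%:R^-1.
  by apply: ge0_ler_powR; rewrite ?invr_ge0 ?nnegrE ?supnorm_ge0.
split; [exact: P_in | exact: al_top | exact: k_oo | by split |].
have [tau_ex|no_tau] := pselect (exists L, is_tau a b K th L).
  apply: squeeze_cvgr (Tch_cvg_tau tau_ex k_oo al_top al1_cvg al2_cvg) Q_cvg.
  by apply: filterE => n; rewrite Tch_le_supnorm ?root_le.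
rewrite (tau_out no_tau) in Q_cvg *; apply: squeeze_cvgr (cvg_cst 0) Q_cvg.
by apply: filterE => n; rewrite powR_ge0 root_le.
Qed.

End AsymptoticChebyshev.

Theorem proposition8p1 (R : realType) (a b : nat)
  (a_gt0 : (0 < a)%N) (b_gt0 : (0 < b)%N) (ab_coprime : coprime a b)
  (K : set (R[i] * R[i]))
  (K_compact : compactC2 K)
  (K_nonpp : ~ pluripolar K)
  (K_inv : forall t : R,
      [set ((cexpi t) ^+ a * z.1, (cexpi t) ^+ b * z.2) | z in K] = K)
  (th : R * R) (th_C : inCC a b th)
  (k : nat -> nat) (al : nat -> nat * nat) (Q : nat -> cpoly R)
  (HQ : asympCheb a b K th k al Q) :
  asympCheb a b K th k al (fun n => top a b (k n) (Q n)).
Proof.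
have [Q_in al_top _ _ _] := HQ.
apply: asympCheb_le HQ _ _ => n.
- exact: inM_top.
- by case: (Q_in n) => Q_poly _ _; exact: supnorm_top_le.
Qed.
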